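(* Let $\{S(t)\}_{t\ge0}$ be a dissipative semigroup on a complete metric space $(X,d)$ and let $\mathcal{B}_0$ be a positively invariant bounded absorbing set. Assume there exist constants $T>0$, $\delta_0>0$, $\eta\in[0,1)$, a function $g:(\mathbb{R}^+)^m\to\mathbb{R}^+$ and pseudometrics $\varrho_1,\dots,\varrho_m$ on $\mathcal{B}_0$ such that: (i) $g$ is non-decreasing in each variable, $g(0,\dots,0)=0$, and $g$ is continuous at $(0,\dots,0)$; (ii) each $\varrho_i$ is precompact on $\mathcal{B}_0$, i.e. every sequence in $\mathcal{B}_0$ has a subsequence which is Cauchy with respect to $\varrho_i$; (iii) the inequality $$d(S(T)y_1,S(T)y_2)\le\eta\, d(y_1,y_2)+g\big(\varrho_1(y_1,y_2),\dots,\varrho_m(y_1,y_2)\big)$$ holds for all $y_1,y_2\in\mathcal{B}_0$ with $\varrho_i(y_1,y_2)\le\delta_0$ for $i=1,\dots,m$. Then $(X,\{S(t)\}_{t\ge0})$ is exponentially decaying with respect to the noncompactness measure, and for every bounded $B\subseteq X$, $$\alpha(S(t)B)\le\eta^{\frac{t-t_*(B)-T}{T}}\alpha(\mathcal{B}_0)\quad\forall t\ge t_*(B)+T,$$ where $t_*(B)$ satisfies $S(t)B\subseteq\mathcal{B}_0$ for all $t\ge t_*(B)$.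
   Context: A semigroup consists of continuous maps $S(t):X\to X$ with $S(0)=I$, $S(t+s)=S(t)S(s)$; it is dissipative if it has a bounded absorbing set (a closed set $\mathcal{B}$ such that every bounded $B$ satisfies $S(t)B\subseteq\mathcal{B}$ for all large $t$); positively invariant means $S(t)\mathcal{B}_0\subseteq\mathcal{B}_0$ for $t\ge0$. $\alpha$ is the Kuratowski measure of noncompactness, $\alpha(B)=\inf\{\delta>0:B\text{ has a finite cover by sets of diameter}<\delta\}$. The system is exponentially decaying with respect to the noncompactness measure if it is dissipative and there are $t_0>0$ and constants $C,\beta>0$ with $\alpha(S(t)\mathcal{B}_0)\le Ce^{-\beta t}$ for all $t\ge t_0$, for a positively invariant bounded absorbing set $\mathcal{B}_0$. *)

From Stdlib Require Import Reals Lra.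
From Stdlib Require Vectors.Fin.
From Coquelicot Require Import Coquelicot.
Open Scope R_scope.

Section Defs.
Variable X : Type.
Variable d : X -> X -> R.

Definition metric_axioms : Prop :=
  (forall x y, 0 <= d x y) /\ (forall x y, d x y = 0 <-> x = y) /\
  (forall x y, d x y = d y x) /\ (forall x y z, d x z <= d x y + d y z).

Definition cauchy_seq (rho : X -> X -> R) (u : nat -> X) : Prop :=
  forall eps, 0 < eps -> exists N, forall n p, (N <= n)%nat -> (N <= p)%nat ->
    rho (u n) (u p) < eps.

Definition seq_conv (u : nat -> X) (l : X) : Prop :=
  forall eps, 0 < eps -> exists N, forall n, (N <= n)%nat -> d (u n) l < eps.

Definition complete_space : Prop :=
  forall u, cauchy_seq d u -> exists l, seq_conv u l.

Definition bounded_set (B : X -> Prop) : Prop :=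
  exists x0 r, forall x, B x -> d x0 x <= r.

Definition closed_set (B : X -> Prop) : Prop :=
  forall u l, (forall n, B (u n)) -> seq_conv u l -> B l.

Definition continuous_map (f : X -> X) : Prop :=
  forall x eps, 0 < eps -> exists del, 0 < del /\
    forall y, d x y < del -> d (f x) (f y) < eps.

Definition img (f : X -> X) (B : X -> Prop) : X -> Prop :=
  fun y => exists x, B x /\ y = f x.

Definition subset_of (A B : X -> Prop) : Prop := forall x, A x -> B x.

Definition is_semigroup (S : R -> X -> X) : Prop :=
  (forall x, S 0 x = x) /\
  (forall t s x, 0 <= t -> 0 <= s -> S (t + s) x = S t (S s x)) /\
  (forall t, 0 <= t -> continuous_map (S t)).

Definition absorbing (S : R -> X -> X) (A : X -> Prop) : Prop :=
  closed_set A /\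
  forall B, bounded_set B -> exists t0, 0 <= t0 /\
    forall t, t0 <= t -> subset_of (img (S t) B) A.

Definition dissipative (S : R -> X -> X) : Prop :=
  exists A, bounded_set A /\ absorbing S A.

Definition pos_invariant (S : R -> X -> X) (A : X -> Prop) : Prop :=
  forall t, 0 <= t -> subset_of (img (S t) A) A.

Definition diam_lt (A : X -> Prop) (delta : R) : Prop :=
  exists delta', delta' < delta /\ forall x y, A x -> A y -> d x y <= delta'.

Definition finite_cover_diam_lt (B : X -> Prop) (delta : R) : Prop :=
  exists l : list (X -> Prop),
    (forall A, List.In A l -> diam_lt A delta) /\
    (forall x, B x -> exists A, List.In A l /\ A x).

(* Kuratowski measure of noncompactness (value in Rbar; +oo if no such cover) *)
Definition kuratowski (B : X -> Prop) : Rbar :=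
  Glb_Rbar (fun delta => 0 < delta /\ finite_cover_diam_lt B delta).

Definition exp_decaying (S : R -> X -> X) : Prop :=
  dissipative S /\
  exists B0, bounded_set B0 /\ absorbing S B0 /\ pos_invariant S B0 /\
  exists t0 C beta, 0 < t0 /\ 0 < C /\ 0 < beta /\
    forall t, t0 <= t -> Rbar_le (kuratowski (img (S t) B0)) (Finite (C * exp (- beta * t))).

Definition pseudometric_on (B0 : X -> Prop) (rho : X -> X -> R) : Prop :=
  (forall x y, B0 x -> B0 y -> 0 <= rho x y) /\
  (forall x, B0 x -> rho x x = 0) /\
  (forall x y, B0 x -> B0 y -> rho x y = rho y x) /\
  (forall x y z, B0 x -> B0 y -> B0 z -> rho x z <= rho x y + rho y z).

Definition precompact_on (B0 : X -> Prop) (rho : X -> X -> R) : Prop :=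
  forall u : nat -> X, (forall n, B0 (u n)) ->
    exists phi : nat -> nat, (forall n, (phi n < phi (S n))%nat) /\
      cauchy_seq rho (fun n => u (phi n)).
End Defs.

Definition rpow (a y : R) : R :=
  if Req_EM_T a 0 then (if Req_EM_T y 0 then 1 else 0) else Rpower a y.

Definition g_admissible (m : nat) (g : (Fin.t m -> R) -> R) : Prop :=
  (forall u, (forall i, 0 <= u i) -> 0 <= g u) /\
  (forall u v, (forall i, 0 <= u i /\ u i <= v i) -> g u <= g v) /\
  g (fun _ => 0) = 0 /\
  (forall eps, 0 < eps -> exists del, 0 < del /\
     forall u, (forall i, 0 <= u i /\ u i <= del) -> Rabs (g u - g (fun _ => 0)) < eps).

(* Cover a subset A of B0 by finitely many sets of diameter close to alpha(A) and
   refine this cover along a common finite net for the pseudometrics rho_i, which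
   exists because they are precompact (otherwise a greedy construction yields a
   sequence with no rho-Cauchy subsequence).  On each refined piece all rho_i are
   small, so by (iii) and the continuity of g at 0 the map S(T) multiplies
   diameters by eta up to an arbitrarily small error: alpha(S(T) A) <= eta alpha(A).
   Iterating from the time B has entered B0 gives
   alpha(S(t) B) <= eta^k alpha(B0) with k = floor((t - tstar) / T), which is bounded
   by the stated power of eta and, replacing eta by (1 + eta) / 2 > 0, by an
   exponential in t. *)

From Stdlib Require Import Reals.
From Stdlib Require Vectors.Fin.
From Coquelicot Require Import Coquelicot.
From Stdlib Require Import Lra Lia List Classical ClassicalEpsilon.
Open Scope R_scope.

Fixpoint fin_all (n : nat) : list (Fin.t n) :=
  match n with
  | O => nil
  | Datatypes.S n' => Fin.F1 :: map Fin.FS (fin_all n')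
  end.

Lemma In_fin_all (n : nat) (i : Fin.t n) : In i (fin_all n).
Proof.
  induction i; simpl; [left; reflexivity | right; apply in_map; exact IHi].
Qed.

Definition strictly_increasing (phi : nat -> nat) : Prop :=
  forall n, (phi n < phi (Datatypes.S n))%nat.

Lemma strictly_increasing_lt (phi : nat -> nat) :
  strictly_increasing phi -> forall n p, (n < p)%nat -> (phi n < phi p)%nat.
Proof.
  intros Hphi n p Hnp; induction Hnp as [|p _ IH]; [apply Hphi|].
  specialize (Hphi p); lia.
Qed.

Lemma strictly_increasing_ge_id (phi : nat -> nat) :
  strictly_increasing phi -> forall n, (n <= phi n)%nat.
Proof.
  intros Hphi n; induction n as [|n IH]; [lia|]. specialize (Hphi n); lia.
Qed.

Lemma strictly_increasing_comp (phi psi : nat -> nat) :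
  strictly_increasing phi -> strictly_increasing psi ->
  strictly_increasing (fun n => phi (psi n)).
Proof. intros Hphi Hpsi n. apply strictly_increasing_lt; auto. Qed.

Lemma cauchy_seq_subseq (X : Type) (rho : X -> X -> R) (u : nat -> X) (phi : nat -> nat) :
  strictly_increasing phi -> cauchy_seq X rho u -> cauchy_seq X rho (fun n => u (phi n)).
Proof.
  intros Hphi Hu eps Heps. destruct (Hu eps Heps) as [N HN]. exists N.
  intros n p Hn Hp. apply HN.
  - pose proof (strictly_increasing_ge_id phi Hphi n); lia.
  - pose proof (strictly_increasing_ge_id phi Hphi p); lia.
Qed.

Section FiniteNets.

Variables (X I : Type) (rho : I -> X -> X -> R) (B0 : X -> Prop).

Definition all_within (L : list I) (eps : R) (x c : X) : Prop :=
  forall i, In i L -> rho i x c < eps.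

Lemma cauchy_subseq_list (L : list I) :
  (forall i, In i L -> precompact_on X B0 (rho i)) ->
  forall u, (forall n, B0 (u n)) ->
  exists phi, strictly_increasing phi /\
    forall i, In i L -> cauchy_seq X (rho i) (fun n => u (phi n)).
Proof.
  induction L as [|a L IH]; intros Hpre u Hu.
  - exists (fun n => n). split; [intro; lia | intros i []].
  - destruct (IH (fun i Hi => Hpre i (or_intror Hi)) u Hu) as [phi [Hphi Hcauchy]].
    destruct (Hpre a (or_introl eq_refl) (fun n => u (phi n)) (fun n => Hu (phi n)))
      as [psi [Hpsi Ha]].
    exists (fun n => phi (psi n)).
    split; [exact (strictly_increasing_comp phi psi Hphi Hpsi)|].
    intros i [<-|Hi]; [exact Ha|].
    exact (cauchy_seq_subseq X (rho i) _ psi Hpsi (Hcauchy i Hi)).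
Qed.

Lemma cauchy_seq_list_common_N (L : list I) (u : nat -> X) :
  (forall i, In i L -> cauchy_seq X (rho i) u) ->
  forall eps, 0 < eps -> exists N, forall n p, (N <= n)%nat -> (N <= p)%nat ->
    all_within L eps (u n) (u p).
Proof.
  intros Hu eps Heps. induction L as [|a L IH].
  - exists O. intros n p _ _ i [].
  - destruct (Hu a (or_introl eq_refl) eps Heps) as [Na HNa].
    destruct (IH (fun i Hi => Hu i (or_intror Hi))) as [NL HNL].
    exists (Nat.max Na NL). intros n p Hn Hp i [<-|Hi].
    + apply HNa; lia.
    + apply HNL; [lia | lia | exact Hi].
Qed.

Lemma greedy_sequence (far : X -> X -> Prop) :
  (forall cs, (forall c, In c cs -> B0 c) ->
     exists x, B0 x /\ forall c, In c cs -> far x c) ->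
  exists u, (forall n, B0 (u n)) /\ forall n p, (n < p)%nat -> far (u p) (u n).
Proof.
  intros Hnext.
  destruct (Hnext nil) as [x0 _]; [intros c []|].
  pose (next cs := epsilon (inhabits x0) (fun x => B0 x /\ forall c, In c cs -> far x c)).
  pose (prefix := fix prefix n := match n with
                                  | O => nil
                                  | Datatypes.S k => next (prefix k) :: prefix k
                                  end).
  assert (Hprefix : forall n c, In c (prefix n) -> B0 c).
  { induction n as [|n IH]; intros c Hc; [destruct Hc|].
    destruct Hc as [<-|Hc]; [|exact (IH c Hc)].
    exact (proj1 (epsilon_spec _ _ (Hnext _ IH))). }
  exists (fun n => next (prefix n)). split.
  - intro n. exact (proj1 (epsilon_spec _ _ (Hnext _ (Hprefix n)))).
  - intros n p Hnp. apply (epsilon_spec _ _ (Hnext _ (Hprefix p))).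
    induction Hnp as [|p _ IH]; [left; reflexivity | right; exact IH].
Qed.

Lemma precompact_list_finite_net (L : list I) :
  (forall i, In i L -> precompact_on X B0 (rho i)) ->
  forall eps, 0 < eps -> exists cs, (forall c, In c cs -> B0 c) /\
    forall x, B0 x -> exists c, In c cs /\ all_within L eps x c.
Proof.
  intros Hpre eps Heps. apply NNPP; intro Hno.
  destruct (greedy_sequence (fun x c => ~ all_within L eps x c)) as [u [Hu Hsep]].
  { intros cs Hcs. apply NNPP; intro Hcover. apply Hno. exists cs. split; [exact Hcs|].
    intros x Hx. apply NNPP; intro Hfar. apply Hcover. exists x. split; [exact Hx|].
    intros c Hc Hwithin. apply Hfar. exists c. split; assumption. }
  destruct (cauchy_subseq_list L Hpre u Hu) as [phi [Hphi Hcauchy]].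
  destruct (cauchy_seq_list_common_N L _ Hcauchy eps Heps) as [N HN].
  apply (Hsep (phi N) (phi (Datatypes.S N)) (Hphi N)).
  apply HN; lia.
Qed.

End FiniteNets.
Section Kuratowski.

Variables (X : Type) (d : X -> X -> R).

Definition alpha_le (A : X -> Prop) (a : R) : Prop :=
  forall eps, 0 < eps -> finite_cover_diam_lt X d A (a + eps).

Lemma alpha_le_subset (A A' : X -> Prop) (a : R) :
  subset_of X A' A -> alpha_le A a -> alpha_le A' a.
Proof.
  intros Hsub HA eps Heps. destruct (HA eps Heps) as [l [Hdiam Hcover]].
  exists l. split; [exact Hdiam | intros x Hx; exact (Hcover x (Hsub x Hx))].
Qed.

Lemma kuratowski_le_of_alpha_le (A : X -> Prop) (a : R) :
  0 <= a -> alpha_le A a -> Rbar_le (kuratowski X d A) (Finite a).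
Proof.
  intros Ha HA. unfold kuratowski.
  destruct (Glb_Rbar_correct (fun delta => 0 < delta /\ finite_cover_diam_lt X d A delta))
    as [Hlb _].
  assert (Hle : forall eps, 0 < eps -> Rbar_le (Glb_Rbar (fun delta =>
            0 < delta /\ finite_cover_diam_lt X d A delta)) (Finite (a + eps))).
  { intros eps Heps. apply Hlb. split; [lra | exact (HA eps Heps)]. }
  destruct (Glb_Rbar _) as [k| |]; simpl in *.
  - apply Rle_plus_epsilon. exact Hle.
  - exact (Hle 1 Rlt_0_1).
  - exact I.
Qed.

Lemma alpha_le_of_kuratowski_le (A : X -> Prop) (a : R) :
  Rbar_le (kuratowski X d A) (Finite a) -> alpha_le A a.
Proof.
  intros HA eps Heps. unfold kuratowski in HA.
  destruct (Glb_Rbar_correct (fun delta => 0 < delta /\ finite_cover_diam_lt X d A delta))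
    as [_ Hglb].
  apply NNPP; intro Hno.
  assert (Hlb : is_lb_Rbar (fun delta => 0 < delta /\ finite_cover_diam_lt X d A delta)
                           (Finite (a + eps))).
  { intros delta [_ [l [Hdiam Hcover]]]. simpl. apply Rnot_lt_le; intro Hlt.
    apply Hno. exists l. split; [|exact Hcover].
    intros C HC. destruct (Hdiam C HC) as [e [He HCe]]. exists e. split; [lra | exact HCe]. }
  specialize (Hglb _ Hlb).
  destruct (Glb_Rbar _); simpl in *; lra.
Qed.

Lemma kuratowski_bounded (B : X -> Prop) :
  metric_axioms X d -> bounded_set X d B ->
  exists a, 0 <= a /\ kuratowski X d B = Finite a.
Proof.
  intros [_ [_ [Hsym Htri]]] [x0 [r Hr]]. unfold kuratowski.
  set (E := fun delta => 0 < delta /\ finite_cover_diam_lt X d B delta).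
  destruct (Glb_Rbar_correct E) as [Hlb Hglb].
  assert (HE : E (2 * Rabs r + 1)).
  { split; [pose proof (Rabs_pos r); lra|].
    exists (B :: nil). split.
    - intros C [<-|[]]. exists (2 * Rabs r). split; [lra|]. intros x y Hx Hy.
      pose proof (Htri x x0 y). rewrite (Hsym x x0) in *.
      pose proof (Hr x Hx); pose proof (Hr y Hy); pose proof (Rle_abs r). lra.
    - intros x Hx. exists B. split; [left; reflexivity | exact Hx]. }
  assert (H0 : is_lb_Rbar E (Finite 0)) by (intros x [Hx _]; simpl; lra).
  specialize (Hglb _ H0). specialize (Hlb _ HE).
  destruct (Glb_Rbar E) as [k| |]; simpl in *; try contradiction.
  exists k; split; [exact Hglb | reflexivity].
Qed.

End Kuratowski.

Lemma g_admissible_small (m : nat) (g : (Fin.t m -> R) -> R) :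
  g_admissible m g -> forall eps, 0 < eps -> exists del, 0 < del /\
    forall u, (forall i, 0 <= u i <= del) -> g u < eps.
Proof.
  intros [_ [_ [Hg0 Hcont]]] eps Heps. destruct (Hcont eps Heps) as [del [Hdel Hsmall]].
  exists del. split; [exact Hdel|]. intros u Hu.
  specialize (Hsmall u Hu). rewrite Hg0, Rminus_0_r in Hsmall.
  pose proof (Rle_abs (g u)). lra.
Qed.

Section ContractionStep.

Variables (X I : Type) (d : X -> X -> R) (B0 : X -> Prop) (L : list I)
  (rho : I -> X -> X -> R) (g : (I -> R) -> R) (F : X -> X) (eta delta0 : R).

Hypothesis L_full : forall i, In i L.
Hypothesis eta_ge0 : 0 <= eta.
Hypothesis delta0_gt0 : 0 < delta0.
Hypothesis rho_pseudometric : forall i, pseudometric_on X B0 (rho i).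
Hypothesis rho_precompact : forall i, precompact_on X B0 (rho i).
Hypothesis g_small : forall eps, 0 < eps -> exists del, 0 < del /\
  forall u, (forall i, 0 <= u i <= del) -> g u < eps.
Hypothesis F_contraction : forall y1 y2, B0 y1 -> B0 y2 ->
  (forall i, rho i y1 y2 <= delta0) ->
  d (F y1) (F y2) <= eta * d y1 y2 + g (fun i => rho i y1 y2).

Lemma contraction_up_to_eps :
  forall eps, 0 < eps -> exists r, 0 < r /\ forall x1 x2, B0 x1 -> B0 x2 ->
    (forall i, rho i x1 x2 < r) -> d (F x1) (F x2) <= eta * d x1 x2 + eps.
Proof.
  intros eps Heps. destruct (g_small eps Heps) as [del [Hdel Hg]].
  exists (Rmin delta0 del). split; [apply Rmin_pos; assumption|].
  intros x1 x2 Hx1 Hx2 Hr.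
  assert (Hr_delta0 : forall i, rho i x1 x2 <= delta0)
    by (intro i; pose proof (Hr i); pose proof (Rmin_l delta0 del); lra).
  assert (Hg_eps : g (fun i => rho i x1 x2) < eps).
  { apply Hg. intro i. destruct (rho_pseudometric i) as [Hnonneg _].
    pose proof (Hr i); pose proof (Rmin_r delta0 del).
    split; [exact (Hnonneg x1 x2 Hx1 Hx2) | lra]. }
  pose proof (F_contraction x1 x2 Hx1 Hx2 Hr_delta0). lra.
Qed.

Lemma alpha_le_img_contraction (A : X -> Prop) (a : R) :
  subset_of X A B0 -> alpha_le X d A a -> alpha_le X d (img X F A) (eta * a).
Proof.
  intros HAB0 HA eps Heps.
  destruct (contraction_up_to_eps (eps / 2)) as [r [Hr HF]]; [lra|].
  destruct (precompact_list_finite_net X I rho B0 L (fun i _ => rho_precompact i) (r / 2))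
    as [cs [Hcs Hnet]]; [lra|].
  set (e := eps / (2 * (eta + 1))).
  assert (He : 0 < e) by (unfold e; apply Rdiv_lt_0_compat; lra).
  assert (Heta_e : eta * e < eps / 2)
    by (unfold e; apply (Rmult_lt_reg_r (2 * (eta + 1))); [lra|]; field_simplify; nra).
  destruct (HA e He) as [l [Hdiam Hcover]].
  set (piece C c := img X F (fun x => C x /\ B0 x /\ all_within X I rho L (r / 2) x c)).
  exists (flat_map (fun C => map (piece C) cs) l). split.
  - intros P HP. apply in_flat_map in HP. destruct HP as [C [HC HP]].
    apply in_map_iff in HP. destruct HP as [c [<- Hc]].
    destruct (Hdiam C HC) as [dC [HdC HCdiam]].
    exists (eta * dC + eps / 2). split.
    + assert (eta * dC <= eta * (a + e)) by (apply Rmult_le_compat_l; lra). nra.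
    + intros y1 y2 [x1 [[Hx1C [Hx1 Hx1c]] ->]] [x2 [[Hx2C [Hx2 Hx2c]] ->]].
      assert (Hx12 : forall i, rho i x1 x2 < r).
      { intro i. destruct (rho_pseudometric i) as [_ [_ [Hsym Htri]]].
        pose proof (Htri x1 c x2 Hx1 (Hcs c Hc) Hx2).
        rewrite (Hsym c x2 (Hcs c Hc) Hx2) in *.
        pose proof (Hx1c i (L_full i)); pose proof (Hx2c i (L_full i)). lra. }
      pose proof (HF x1 x2 Hx1 Hx2 Hx12).
      assert (eta * d x1 x2 <= eta * dC) by (apply Rmult_le_compat_l; auto). lra.
  - intros y [x [Hx ->]]. destruct (Hcover x Hx) as [C [HC HCx]].
    destruct (Hnet x (HAB0 x Hx)) as [c [Hc Hxc]].
    exists (piece C c). split.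
    + apply in_flat_map. exists C. split; [exact HC|]. apply in_map; exact Hc.
    + exists x. split; [split; [|split]|]; auto.
Qed.

End ContractionStep.

Section Iteration.

Variables (X : Type) (d : X -> X -> R) (S : R -> X -> X) (B0 : X -> Prop) (T eta a0 : R).

Hypothesis S_add : forall t s x, 0 <= t -> 0 <= s -> S (t + s) x = S t (S s x).
Hypothesis T_gt0 : 0 < T.
Hypothesis alpha_B0 : alpha_le X d B0 a0.
Hypothesis alpha_step : forall A a, subset_of X A B0 -> alpha_le X d A a ->
  alpha_le X d (img X (S T) A) (eta * a).

Lemma alpha_le_iter (B : X -> Prop) (s : R) :
  0 <= s -> (forall t, s <= t -> subset_of X (img X (S t) B) B0) ->
  forall k : nat, alpha_le X d (img X (S (INR k * T + s)) B) (eta ^ k * a0).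
Proof.
  intros Hs Habs k. induction k as [|k IH].
  - simpl. rewrite Rmult_0_l, Rplus_0_l, Rmult_1_l.
    exact (alpha_le_subset X d B0 _ a0 (Habs s (Rle_refl s)) alpha_B0).
  - assert (HkT : 0 <= INR k * T) by (apply Rmult_le_pos; [apply pos_INR | lra]).
    replace (eta ^ Datatypes.S k * a0) with (eta * (eta ^ k * a0)) by (simpl; ring).
    apply (alpha_le_subset X d (img X (S T) (img X (S (INR k * T + s)) B))).
    + intros y [x [Hx ->]]. exists (S (INR k * T + s) x). split; [exists x; split; auto|].
      rewrite S_INR, <- S_add by lra. f_equal. ring.
    + apply alpha_step; [apply Habs; lra | exact IH].
Qed.

Lemma alpha_le_after_absorption (B : X -> Prop) (tstar t : R) :
  0 <= tstar -> (forall t, tstar <= t -> subset_of X (img X (S t) B) B0) ->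
  tstar + T <= t ->
  exists k : nat, (t - tstar) / T - 1 <= INR k /\
    alpha_le X d (img X (S t) B) (eta ^ k * a0).
Proof.
  intros Htstar Habs Ht.
  assert (Hratio : 1 <= (t - tstar) / T)
    by (apply (Rmult_le_reg_r T); [lra | unfold Rdiv; rewrite Rmult_assoc, Rinv_l; lra]).
  destruct (nfloor_ex ((t - tstar) / T)) as [k [Hk1 Hk2]]; [lra|].
  assert (HkT : INR k * T <= t - tstar).
  { apply (Rmult_le_compat_r T) in Hk1; [|lra].
    unfold Rdiv in Hk1. rewrite Rmult_assoc, Rinv_l in Hk1; lra. }
  exists k. split; [lra|].
  replace t with (INR k * T + (t - INR k * T)) by ring.
  apply alpha_le_iter; [lra|]. intros t' Ht'. apply Habs. lra.
Qed.

End Iteration.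

Lemma exp_le (x y : R) : x <= y -> exp x <= exp y.
Proof.
  intro Hxy. destruct (Rle_lt_or_eq_dec x y Hxy) as [Hlt | ->].
  - exact (Rlt_le _ _ (exp_increasing x y Hlt)).
  - apply Rle_refl.
Qed.

Lemma pow_le_rpow (q y : R) (k : nat) :
  0 <= q <= 1 -> 0 <= y -> y <= INR k -> q ^ k <= rpow q y.
Proof.
  intros Hq Hy Hyk. unfold rpow.
  destruct (Req_EM_T q 0) as [->|Hq0].
  - destruct (Req_EM_T y 0) as [_|Hy0].
    + destruct k as [|k]; simpl; lra.
    + destruct k as [|k]; simpl in *; lra.
  - rewrite <- Rpower_pow by lra. unfold Rpower. apply exp_le.
    assert (Hln : ln q <= 0) by (rewrite <- ln_1; apply ln_le; lra).
    rewrite !(Rmult_comm _ (ln q)). apply Rmult_le_compat_neg_l; assumption.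
Qed.

Lemma pow_le_exp_decay (q T t : R) (k : nat) :
  0 < q < 1 -> 0 < T -> t / T - 1 <= INR k ->
  q ^ k <= / q * exp (- (- ln q / T) * t).
Proof.
  intros Hq HT Hk.
  assert (Hln : ln q < 0) by (rewrite <- ln_1; apply ln_increasing; lra).
  replace (/ q) with (exp (- ln q)) by (rewrite exp_Ropp, exp_ln; lra).
  rewrite <- Rpower_pow, <- exp_plus by lra. unfold Rpower. apply exp_le.
  replace (- ln q + - (- ln q / T) * t) with (ln q * (t / T - 1)) by (field; lra).
  rewrite Rmult_comm. apply Rmult_le_compat_neg_l; lra.
Qed.

Lemma pow_exp_decay (eta a0 T : R) :
  0 <= eta < 1 -> 0 <= a0 -> 0 < T -> exists C beta, 0 < C /\ 0 < beta /\
    forall t (k : nat), t / T - 1 <= INR k -> eta ^ k * a0 <= C * exp (- beta * t).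
Proof.
  intros Heta Ha0 HT. set (q := (1 + eta) / 2).
  assert (Hq : 0 < q < 1) by (unfold q; lra).
  assert (Hln : ln q < 0) by (rewrite <- ln_1; apply ln_increasing; lra).
  exists ((a0 + 1) / q), (- ln q / T).
  split; [apply Rdiv_lt_0_compat; lra|]. split; [apply Rdiv_lt_0_compat; lra|].
  intros t k Hk.
  pose proof (pow_le_exp_decay q T t k Hq HT Hk).
  assert (eta ^ k <= q ^ k) by (apply pow_incr; unfold q; lra).
  assert (0 <= eta ^ k) by (apply pow_le; lra).
  unfold Rdiv. nra.
Qed.

Theorem theorem4p5 (X : Type) (d : X -> X -> R) (S : R -> X -> X)
  (B0 : X -> Prop) (T delta0 eta : R) (m : nat)
  (g : (Fin.t m -> R) -> R) (rho : Fin.t m -> X -> X -> R) :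
  metric_axioms X d -> complete_space X d ->
  is_semigroup X d S -> dissipative X d S ->
  bounded_set X d B0 -> absorbing X d S B0 -> pos_invariant X S B0 ->
  0 < T -> 0 < delta0 -> 0 <= eta < 1 ->
  g_admissible m g ->
  (forall i, pseudometric_on X B0 (rho i)) ->
  (forall i, precompact_on X B0 (rho i)) ->
  (forall y1 y2, B0 y1 -> B0 y2 -> (forall i, rho i y1 y2 <= delta0) ->
     d (S T y1) (S T y2) <= eta * d y1 y2 + g (fun i => rho i y1 y2)) ->
  exp_decaying X d S /\
  (forall B, bounded_set X d B -> forall tstar, 0 <= tstar ->
     (forall t, tstar <= t -> subset_of X (img X (S t) B) B0) ->
     forall t, tstar + T <= t ->
       Rbar_le (kuratowski X d (img X (S t) B))
               (Rbar_mult (Finite (rpow eta ((t - tstar - T) / T))) (kuratowski X d B0))).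
Proof.
  intros Hmetric _ [_ [S_add _]] Hdiss HB0 Habs Hinv HT Hdelta0 [Heta0 Heta1] Hg
    Hpseudo Hprecompact Hcontr.
  destruct (kuratowski_bounded X d B0 Hmetric HB0) as [a0 [Ha0 Hk0]].
  assert (HalphaB0 : alpha_le X d B0 a0)
    by (apply alpha_le_of_kuratowski_le; rewrite Hk0; apply Rle_refl).
  assert (Hstep := alpha_le_img_contraction X (Fin.t m) d B0 (fin_all m) rho g (S T) eta
    delta0 (In_fin_all m) Heta0 Hdelta0 Hpseudo Hprecompact (g_admissible_small m g Hg) Hcontr).
  pose proof (alpha_le_after_absorption X d S B0 T eta a0 S_add HT HalphaB0 Hstep) as Hdecay.
  assert (Hkur : forall A (k : nat), alpha_le X d A (eta ^ k * a0) ->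
            Rbar_le (kuratowski X d A) (Finite (eta ^ k * a0)))
    by (intros; apply kuratowski_le_of_alpha_le; [apply Rmult_le_pos; [apply pow_le|]|]; auto).
  split.
  - destruct (pow_exp_decay eta a0 T (conj Heta0 Heta1) Ha0 HT) as [C [beta [HC [Hbeta Hexp]]]].
    split; [exact Hdiss|]. exists B0. do 3 (split; [assumption|]).
    exists T, C, beta. do 3 (split; [assumption|]). intros t Ht.
    destruct (Hdecay B0 0 t (Rle_refl 0) (fun t' Ht' => Hinv t' Ht') ltac:(lra))
      as [k [Hk Halpha]].
    apply (Rbar_le_trans _ _ _ (Hkur _ k Halpha)). apply Hexp. lra.
  - intros B _ tstar Htstar Hsub t Ht.
    destruct (Hdecay B tstar t Htstar Hsub Ht) as [k [Hk Halpha]].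
    rewrite Hk0. apply (Rbar_le_trans _ _ _ (Hkur _ k Halpha)). simpl.
    apply Rmult_le_compat_r; [exact Ha0|].
    apply pow_le_rpow; [lra | | ].
    + apply Rdiv_le_0_compat; lra.
    + replace ((t - tstar - T) / T) with ((t - tstar) / T - 1) by (field; lra). exact Hk.
Qed.
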